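(* Fix $\epsilon>0$ and define the relation $P$ on $\mathbb R$ by $(x,y)\in P\iff x+\epsilon\geq y$. Let $\chi$ be the indicator function of the open interval $(-1,1)$, let $f(t)=t+(1-t^2)\chi(t)$, and let $\mathcal V=\{v_\alpha:\alpha\in\mathbb R\}$ where $v_\alpha(x)=f\big(\tfrac{x-\alpha}{\epsilon}\big)$. Then each $v_\alpha$ is continuous, $P$ is complete and negatively transitive but not transitive, and for all $x,y\in\mathbb R$: $(x,y)\in P\iff\exists\alpha\in\mathbb R,\ v_\alpha(x)\geq v_\alpha(y)$.
   Context: $P$ is complete if for all $x,y$, $(x,y)\in P$ or $(y,x)\in P$; negatively transitive if $(x,y)\notin P$ and $(y,z)\notin P$ imply $(x,z)\notin P$; transitive if $(x,y),(y,z)\in P$ imply $(x,z)\in P$. *)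

From Stdlib Require Import Reals.
Open Scope R_scope.

Definition complete (P : R -> R -> Prop) : Prop :=
  forall x y, P x y \/ P y x.
Definition negatively_transitive (P : R -> R -> Prop) : Prop :=
  forall x y z, ~ P x y -> ~ P y z -> ~ P x z.
Definition transitive (P : R -> R -> Prop) : Prop :=
  forall x y z, P x y -> P y z -> P x z.

Definition Prel (eps : R) (x y : R) : Prop := x + eps >= y.

Definition chi (t : R) : R :=
  if Rlt_dec (-1) t then (if Rlt_dec t 1 then 1 else 0) else 0.

Definition f (t : R) : R := t + (1 - t ^ 2) * chi t.

Definition v (eps alpha : R) (x : R) : R := f ((x - alpha) / eps).

(* The function [f] satisfies [t <= f t <= t + 1], with [f t >= 1] for
   [t >= 0] and [f 1 = 1].  Hence [v_alpha x >= v_alpha y] forces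
   [y - alpha <= x - alpha + eps], and conversely [alpha := y - eps] puts [y]
   at the point where [v_alpha] takes the value [1], which every [x] with
   [x + eps >= y] reaches or exceeds.  Continuity comes from the closed form
   [f t = t + max (1 - t^2) 0]. *)

From Stdlib Require Import Reals Lra FunctionalExtensionality.
Open Scope R_scope.

Lemma f_eq_abs (t : R) : f t = t + (1 - t ^ 2 + Rabs (1 - t ^ 2)) / 2.
Proof.
  unfold f, chi.
  destruct (Rlt_dec (-1) t); [destruct (Rlt_dec t 1)|].
  - rewrite Rabs_right by nra; lra.
  - rewrite Rabs_left1 by nra; lra.
  - rewrite Rabs_left1 by nra; lra.
Qed.

Lemma continuity_f : continuity f.
Proof.
  replace f with (fun t => t + (1 - t ^ 2 + Rabs (1 - t ^ 2)) / 2).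
  - intro t; reg.
  - apply functional_extensionality; intro t; now rewrite f_eq_abs.
Qed.

Lemma continuity_v (eps alpha : R) : continuity (v eps alpha).
Proof.
  intro x; apply (continuity_comp (fun x => (x - alpha) / eps) f).
  - unfold Rdiv; reg.
  - apply continuity_f.
Qed.

Lemma f_ge (t : R) : t <= f t.
Proof.
  rewrite f_eq_abs.
  pose proof (Rle_abs (- (1 - t ^ 2))) as Habs.
  rewrite Rabs_Ropp in Habs; lra.
Qed.

Lemma f_le_succ (t : R) : f t <= t + 1.
Proof. unfold f, chi; destruct (Rlt_dec (-1) t); [destruct (Rlt_dec t 1)|]; nra. Qed.

Lemma f_ge1 (t : R) : 0 <= t -> 1 <= f t.
Proof. intro Ht; unfold f, chi; destruct (Rlt_dec (-1) t); [destruct (Rlt_dec t 1)|]; nra. Qed.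

Lemma f_1 : f 1 = 1.
Proof. unfold f, chi; destruct (Rlt_dec (-1) 1); destruct (Rlt_dec 1 1); lra. Qed.

Lemma Prel_complete (eps : R) : 0 <= eps -> complete (Prel eps).
Proof. unfold complete, Prel; intros heps x y; destruct (Rle_or_lt x y); [right | left]; lra. Qed.

Lemma Prel_negatively_transitive (eps : R) : 0 <= eps -> negatively_transitive (Prel eps).
Proof. unfold negatively_transitive, Prel; intros; lra. Qed.

Lemma Prel_not_transitive (eps : R) : eps > 0 -> ~ transitive (Prel eps).
Proof. unfold transitive, Prel; intros heps Htrans; specialize (Htrans 0 eps (2 * eps)); lra. Qed.

Lemma Prel_of_v_ge {eps alpha x y : R} :
  eps > 0 -> v eps alpha x >= v eps alpha y -> Prel eps x y.
Proof.
  unfold v, Prel; intros heps Hv.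
  pose proof (f_ge ((y - alpha) / eps)); pose proof (f_le_succ ((x - alpha) / eps)).
  assert (Hdiv : (y - alpha) / eps <= (x - alpha + eps) / eps).
  { replace ((x - alpha + eps) / eps) with ((x - alpha) / eps + 1) by (field; lra); lra. }
  apply Rmult_le_compat_r with (r := eps) in Hdiv; [|lra].
  unfold Rdiv in Hdiv; rewrite !Rmult_assoc, Rinv_l in Hdiv; lra.
Qed.

Lemma v_ge_of_Prel {eps x y : R} :
  eps > 0 -> Prel eps x y -> v eps (y - eps) x >= v eps (y - eps) y.
Proof.
  unfold v, Prel; intros heps Hxy.
  replace ((y - (y - eps)) / eps) with 1 by (field; lra).
  rewrite f_1; apply Rle_ge, f_ge1.
  replace ((x - (y - eps)) / eps) with ((x + eps - y) / eps) by (f_equal; ring).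
  apply Rmult_le_pos; [lra | left; apply Rinv_0_lt_compat; lra].
Qed.

Theorem mainTheorem4 (eps : R) (heps : eps > 0) :
  (forall alpha : R, continuity (v eps alpha)) /\
  complete (Prel eps) /\
  negatively_transitive (Prel eps) /\
  ~ transitive (Prel eps) /\
  (forall x y : R, Prel eps x y <-> exists alpha : R, v eps alpha x >= v eps alpha y).
Proof.
  split; [exact (continuity_v eps)|].
  split; [apply Prel_complete; lra|].
  split; [apply Prel_negatively_transitive; lra|].
  split; [exact (Prel_not_transitive eps heps)|].
  intros x y; split.
  - intro Hxy; exists (y - eps); exact (v_ge_of_Prel heps Hxy).
  - intros [alpha Hv]; exact (Prel_of_v_ge heps Hv).
Qed.
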